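(* Let $N=2^n$. For any pixel indices $(j,k)$ and $(j,k+1)$ in $\{1,\dots,N\}^2$, there are at most $6n$ discrete bivariate Haar wavelets $\mathbf{h}$ which are not constant on these indices, i.e. for which $\mathbf{h}_{j,k}\ne\mathbf{h}_{j,k+1}$.
   Context: Haar system: $H^0=\mathbf{1}_{[0,1)}$, $H^1=\mathbf{1}_{[0,1/2)}-\mathbf{1}_{[1/2,1)}$; for $e=(e_1,e_2)\in\{(0,1),(1,0),(1,1)\}$, $H^e(u,v)=H^{e_1}(u)H^{e_2}(v)$ and $H^e_{p,q}(x)=2^pH^e(2^px-q)$ for $p\ge0$, $q\in\mathbb{Z}^2\cap2^p[0,1)^2$. Identifying $\mathbf{X}\in\mathbb{C}^{N\times N}$ with the function on $[0,1)^2$ equal to $NX_{j,k}$ on $[\frac{j-1}{N},\frac jN)\times[\frac{k-1}{N},\frac kN)$, the discrete bivariate Haar wavelets are the images $\mathbf{h}^e_{p,q}$ corresponding to $H^e_{p,q}$ with $0\le p\le n-1$ (together with the constant image they form an orthonormal basis of $\mathbb{C}^{N\times N}$). *)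

From HB Require Import structures.
From mathcomp Require Import all_boot all_order all_algebra.
Set Implicit Arguments. Unset Strict Implicit. Unset Printing Implicit Defensive.
Import Order.TTheory GRing.Theory Num.Theory.
Local Open Scope ring_scope.

Section Haar.
Variable R : realFieldType.

Definition H0 (t : R) : R := if (0 <= t) && (t < 1) then 1 else 0.
Definition H1 (t : R) : R :=
  (if (0 <= t) && (t < 1/2) then 1 else 0) - (if (1/2 <= t) && (t < 1) then 1 else 0).

Definition Huni (b : bool) : R -> R := if b then H1 else H0.

Definition Hbiv (e : bool * bool) (u v : R) : R := Huni e.1 u * Huni e.2 v.

Definition Hpq (e : bool * bool) (p : nat) (q : nat * nat) (x1 x2 : R) : R :=
  2 ^+ p * Hbiv e (2 ^+ p * x1 - q.1%:R) (2 ^+ p * x2 - q.2%:R).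

(* Discrete wavelet image h^e_{p,q} in R^{N x N}, N = 2^n, with 0-based pixel
   indices (j,k) (pixel [j/N,(j+1)/N) x [k/N,(k+1)/N)).  The function H^e_{p,q}
   (p <= n-1) is constant on each pixel, equal to N * h_{j,k}; we evaluate it at
   the lower-left corner of the pixel. *)
Definition haar_img (n : nat) (e : bool * bool) (p : nat) (q : nat * nat)
  (j k : nat) : R :=
  (2 ^+ n)^-1 * Hpq e p q (j%:R / 2 ^+ n) (k%:R / 2 ^+ n).

End Haar.

(* Index type of candidate wavelets for N = 2^n: (e, p, q) with p < n and
   q in 'I_N x 'I_N; validity: e <> (0,0) and q in Z^2 \cap 2^p [0,1)^2. *)
Definition haar_index (n : nat) : finType :=
  ((bool * bool) * 'I_n * ('I_(2 ^ n) * 'I_(2 ^ n)))%type.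

Definition haar_valid (n : nat) (w : haar_index n) : bool :=
  let: (e, p, q) := w in
  [&& e != (false, false), (q.1 < 2 ^ p)%N & (q.2 < 2 ^ p)%N].

Definition haar_of (R : realFieldType) (n : nat) (w : haar_index n) (j k : nat) : R :=
  let: (e, p, q) := w in haar_img R n e p (val q.1, val q.2) j k.

From HB Require Import structures.
From mathcomp Require Import all_boot all_order all_algebra.
From mathcomp Require Import ring.
Import Order.TTheory GRing.Theory Num.Theory.
Local Open Scope ring_scope.

(* A wavelet of scale p is supported on one dyadic square of side 2^-p.  If it
   separates the horizontally adjacent pixels (j,k) and (j,k+1), that square
   meets one of them, so the row offset q1 is forced and the column offset q2
   takes at most two values.  Hence each of the 3 types e and n scales p
   contributes at most 2 wavelets. *)

Lemma Huni_neq0 (R : realFieldType) (b : bool) (t : R) :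
  Huni b t != 0 -> 0 <= t < 1.
Proof.
have half_lt1 : 1 / 2 < 1 :> R by rewrite ltr_pdivrMr // mul1r ltr1n.
case: b; rewrite /Huni /H0 /H1; last by case: ifP => //; rewrite eqxx.
case: ifP => [/andP[t_ge0 t_lt]|_]; case: ifP => [/andP[t_ge t_lt1]|_] //.
- by rewrite t_ge0 t_lt1.
- by rewrite t_ge0 (lt_trans t_lt half_lt1).
- by rewrite t_lt1 andbT (le_trans _ t_ge) ?divr_ge0.
- by rewrite subrr eqxx.
Qed.

Lemma divn_of_frac_range {R : realFieldType} {x d q : nat} : (0 < d)%N ->
  0 <= (x%:R / d%:R - q%:R : R) < 1 -> q = (x %/ d)%N.
Proof.
move=> d_gt0; have d_gt0R : 0 < d%:R :> R by rewrite ltr0n.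
rewrite subr_ge0 ler_pdivlMr // ltrBlDr ltr_pdivrMr // nat1r -!natrM.
rewrite ler_nat ltr_nat => /andP[lo hi].
apply/eqP; rewrite eqn_leq leq_divRL // lo /=.
by rewrite -ltnS ltn_divLR.
Qed.

Lemma rescale_pixel (R : realFieldType) (n p x : nat) : (p <= n)%N ->
  2 ^+ p * (x%:R / 2 ^+ n) = x%:R / (2 ^ (n - p))%:R :> R.
Proof.
move=> le_pn; rewrite natrX -[in 2 ^+ n](subnKC le_pn) exprD.
have two_pow_neq0 m : 2 ^+ m != 0 :> R by rewrite expf_neq0 // pnatr_eq0.
by field; rewrite !two_pow_neq0.
Qed.

Lemma mulr_neq_neq0 (R : idomainType) (a b c : R) :
  a * b != a * c -> a != 0 /\ (b != 0 \/ c != 0).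
Proof.
have [->|a_neq0] := eqVneq a 0; first by rewrite !mul0r eqxx.
have [->|b_neq0] := eqVneq b 0; last by split; [|left].
by have [->|c_neq0] := eqVneq c 0; [rewrite eqxx | split; [|right]].
Qed.

Lemma haar_img_jump (R : realFieldType) (n p : nat) (e : bool * bool)
    (a b j k : nat) : (p < n)%N ->
  haar_img R n e p (a, b) j k != haar_img R n e p (a, b) j k.+1 ->
  a = (j %/ 2 ^ (n - p))%N /\
  b \in [:: (k %/ 2 ^ (n - p))%N; (k.+1 %/ 2 ^ (n - p))%N].
Proof.
move=> lt_pn; have d_gt0 : (0 < 2 ^ (n - p))%N by rewrite expn_gt0.
rewrite /haar_img /Hpq /Hbiv !(rescale_pixel R _ _ _ (ltnW lt_pn)) /=.
move=> /(contra_neq (@congr1 _ _ (fun z => 2 ^- n * (2 ^+ p * z)) _ _)).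
move=> /mulr_neq_neq0[/Huni_neq0 ja jb].
split; first exact: divn_of_frac_range d_gt0 ja.
by case: jb => /Huni_neq0 /(divn_of_frac_range d_gt0) ->; rewrite !inE eqxx ?orbT.
Qed.

Lemma eq_in_pair {T : eqType} {x y a b : T} :
  a \in [:: x; y] -> b \in [:: x; y] -> (a == x) = (b == x) -> a = b.
Proof.
rewrite !inE => /orP[]/eqP-> /orP[]/eqP->; rewrite ?eqxx //.
- by move/esym/eqP.
- by move/eqP.
Qed.

Theorem lemma9 (R : realFieldType) (n : nat) (j k : 'I_(2 ^ n))
  (hk : (k.+1 < 2 ^ n)%N) :
  (#|[set w : haar_index n |
      haar_valid w && (haar_of R w j k != haar_of R w j k.+1)]| <= 6 * n)%N.
Proof.
set A := [set w : haar_index n | _].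
(* The bit tells which of the two admissible column offsets q2 is used. *)
pose f (w : haar_index n) : (bool * bool) * 'I_n * bool :=
  let: (e, p, q) := w in (e, p, val q.2 == (k %/ 2 ^ (n - p))%N).
have f_inj : {in A &, injective f}.
  move=> [[e p] [q1 q2]] [[e' p'] [q1' q2']] w_in w_in' [e'E p'E q2_eqb].
  subst e' p'; move: w_in w_in'; rewrite !inE.
  move=> /andP[_ /haar_img_jump-/(_ (ltn_ord p))[q1E q2_in]].
  move=> /andP[_ /haar_img_jump-/(_ (ltn_ord p))[q1E' q2_in']].
  have q2E : val q2 = val q2' := eq_in_pair q2_in q2_in' q2_eqb.
  by congr (_, _, (_, _)); apply: val_inj; rewrite /= ?q1E ?q1E'.
have f_img : f @: A \subset setX (setX [set~ (false, false)] setT) setT.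
  apply/subsetP=> _ /imsetP[[[e p] q] /[!inE] /andP[/and3P[e_neq0 _ _] _] ->].
  by rewrite /= e_neq0.
rewrite -(card_in_imset f_inj); apply: leq_trans (subset_leq_card f_img) _.
by rewrite !cardsX cardsC1 !cardsT card_prod card_bool card_ord mulnC mulnA.
Qed.
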